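(* Let $n\ge3$. Let $\tilde\Lambda_1$ be the set of $\alpha\in\mathbb{R}\setminus\mathrm{ev}(A_n)$ satisfying \[ (\alpha+2)\langle\mathbf 1,(A_n-\alpha I)^{-1}\mathbf 1\rangle-1=0, \] and put $\Lambda_1=\tilde\Lambda_1\setminus(\mathrm{ev}(A_n)\cup\{0,-1,-2\})$. Then \[ \Lambda_1\setminus\{2\}=\{x\in\mathbb{R}:\Phi_n(x)=0\}\setminus(\mathrm{ev}(A_n)\cup\{0,-1,2,-2\}). \]
   Context: $A_n$ is the $n\times n$ adjacency matrix of the path $P_n$ (ones on the super- and subdiagonal, zeros elsewhere), $\mathrm{ev}(A_n)$ its set of eigenvalues, $\mathbf 1$ the all-ones vector. $U_n$ is the Chebyshev polynomial of the second kind, $U_n(\cos\theta)=\sin((n+1)\theta)/\sin\theta$, $\tilde U_n(x)=U_n(x/2)$, and $\Phi_n(x)=((n+1)x^2-6x-4n)\tilde U_n(x)+2(x+2)\tilde U_{n-1}(x)+2(x+2)$. *)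

From HB Require Import structures.
From mathcomp Require Import all_boot all_order all_algebra.
Set Implicit Arguments. Unset Strict Implicit. Unset Printing Implicit Defensive.
Import Order.TTheory GRing.Theory Num.Theory.
Local Open Scope ring_scope.

Definition pathA (R : ringType) (n : nat) : 'M[R]_n :=
  \matrix_(i < n, j < n) (if (i.+1 == j :> nat) || (j.+1 == i :> nat) then 1 else 0).

Definition ones (R : ringType) (n : nat) : 'cV[R]_n := const_mx 1.

Definition resolvent_sum (R : fieldType) (n : nat) (a : R) : R :=
  ((ones R n)^T *m invmx (pathA R n - a%:M) *m ones R n) 0 0.

(* Ut k x = U_k(x/2), via the Chebyshev recurrence
   Ut 0 = 1, Ut 1 = x, Ut (k+2) = x Ut (k+1) - Ut k.
   Upair k x = (Ut k x, Ut (k+1) x). *)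
Fixpoint Upair (R : ringType) (k : nat) (x : R) : R * R :=
  match k with
  | 0 => (1, x)
  | k'.+1 => let p := Upair k' x in (p.2, x * p.2 - p.1)
  end.
Definition Ut (R : ringType) (k : nat) (x : R) : R := (Upair k x).1.

Definition Phi (R : ringType) (n : nat) (x : R) : R :=
  ((n.+1)%:R * x ^+ 2 - 6 * x - 4 * n%:R) * Ut n x
  + 2 * (x + 2) * Ut n.-1 x + 2 * (x + 2).

Definition Lambda1tilde (R : fieldType) (n : nat) (a : R) : Prop :=
  ~~ eigenvalue (pathA R n) a /\ (a + 2) * resolvent_sum n a - 1 = 0.

Definition Lambda1 (R : fieldType) (n : nat) (a : R) : Prop :=
  Lambda1tilde n a /\ ~~ eigenvalue (pathA R n) a /\ a <> 0 /\ a <> -1 /\ a <> -2.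

From HB Require Import structures.
From mathcomp Require Import all_boot all_order all_algebra.
From mathcomp Require Import ring zify.
Set Implicit Arguments. Unset Strict Implicit. Unset Printing Implicit Defensive.
Import Order.TTheory GRing.Theory Num.Theory.
Local Open Scope ring_scope.

(* Write u_k = U_(k-1)(x/2), so u_0 = 0, u_1 = 1 and u_(k+2) = x u_(k+1) - u_k.
   The row vector (u_1, ..., u_n) satisfies u A_n = x u - u_(n+1) e_n, so
   u_(n+1) <> 0 when x is not an eigenvalue, and w_j = u_(n+1) - u_j - u_(n+1-j)
   solves (A_n - x) w = (2 - x) u_(n+1) 1.  Summing w and using the telescoping
   identity (x - 2)(u_1 + ... + u_n) = u_(n+1) - u_n - 1 gives
     ((x + 2) <1, (A_n - x)^-1 1> - 1) (2 - x)^2 u_(n+1) = - Phi_n(x),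
   so off ev(A_n) and x = 2 both equations have the same solutions
   (only n >= 1 is needed). *)

Definition chebu (R : nzRingType) (x : R) (k : nat) : R :=
  if k is k'.+1 then Ut k' x else 0.

Section ChebyshevSequence.
Variable R : comNzRingType.
Implicit Types x : R.

Lemma chebu0 x : chebu x 0 = 0. Proof. by []. Qed.

Lemma chebu1 x : chebu x 1 = 1. Proof. by []. Qed.

Lemma chebuSS x k : chebu x k.+2 = x * chebu x k.+1 - chebu x k.
Proof. by case: k => [|k] //=; rewrite /Ut /= mulr1 subr0. Qed.

Lemma sum_chebu x n :
  (x - 2) * \sum_(i < n) chebu x i.+1 = chebu x n.+1 - chebu x n - 1.
Proof.
elim: n => [|n IHn]; first by rewrite big_ord0 mulr0 chebu1 subr0 subrr.
by rewrite big_ord_recr mulrDr IHn chebuSS; ring.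
Qed.

Lemma Phi_chebu n x : (0 < n)%N ->
  Phi n x = ((n.+1)%:R * x ^+ 2 - 6 * x - 4 * n%:R) * chebu x n.+1
            + 2 * (x + 2) * chebu x n + 2 * (x + 2).
Proof. by case: n. Qed.

End ChebyshevSequence.

Section PathMatrix.
Variable R : nzRingType.

Lemma mul_pathA_col n (g : nat -> R) : g 0%N = 0 -> g n.+1 = 0 ->
  pathA R n *m \col_(j < n) g j.+1 = \col_(i < n) (g i + g i.+2).
Proof.
move=> g0 gSn; apply/colP => i; rewrite !mxE.
have indicator_mulr b (a : R) : (if b then 1 else 0) * a = if b then a else 0.
  by case: b; rewrite ?mul1r ?mul0r.
under eq_bigr => j _ do rewrite !mxE indicator_mulr.
rewrite -big_mkcond (bigID (fun j : 'I_n => j == i.+1 :> nat)) /= addrC.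
congr (_ + _).
- case: i => [[|i] /= lt_in].
    by rewrite g0 big_pred0 // => j; rewrite orbF eq_sym andbN.
  rewrite (eq_bigl (fun j : 'I_n => j == i :> nat)) => [|j]; last first.
    rewrite eqSS; have [->|ne] := eqVneq (j : nat) i.
      by rewrite orbT; lia.
    by rewrite orbF eq_sym andbN.
  by rewrite (big_ord1_eq _ (fun j => g j.+1)) ltnW.
- rewrite (eq_bigl (fun j : 'I_n => j == i.+1 :> nat)) => [|j]; last first.
    by have [->|_] := eqVneq (j : nat) i.+1; rewrite ?andbF ?andbT ?eqxx.
  rewrite (big_ord1_eq _ (fun j => g j.+1)); case: ltnP => // le_ni.
  by have -> : i.+2 = n.+1 by have := ltn_ord i; lia.
Qed.

Lemma mul_row_pathA n (g : nat -> R) : g 0%N = 0 -> g n.+1 = 0 ->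
  \row_(j < n) g j.+1 *m pathA R n = \row_(i < n) (g i + g i.+2).
Proof.
move=> g0 gSn; apply/rowP => i; move/colP/(_ i): (mul_pathA_col g0 gSn).
rewrite !mxE => <-; apply: eq_bigr => j _.
by rewrite !mxE orbC; case: ifP; rewrite ?mulr1 ?mul1r ?mulr0 ?mul0r.
Qed.

End PathMatrix.

Lemma not_eigenvalue_unitmx (R : fieldType) n (A : 'M[R]_n) a :
  ~~ eigenvalue A a -> A - a%:M \in unitmx.
Proof. by move=> not_ev; rewrite -row_free_unit -kermx_eq0; exact: negbNE. Qed.

Section PathResolvent.
Variable R : fieldType.
Implicit Types x : R.

Lemma chebu_neq0 n x : (0 < n)%N -> ~~ eigenvalue (pathA R n) x -> chebu x n.+1 != 0.
Proof.
move=> n_gt0 not_ev; apply: contraNneq not_ev => u0; apply/eigenvalueP.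
exists (\row_(j < n) chebu x j.+1).
  by rewrite mul_row_pathA //; apply/rowP => i; rewrite !mxE chebuSS addrC subrK.
case: n n_gt0 {u0} => // n _.
by apply/eqP => /rowP/(_ ord0); rewrite !mxE chebu1; exact/eqP/oner_neq0.
Qed.

Definition resolvent_vec x n : 'cV[R]_n :=
  \col_(j < n) (chebu x n.+1 - chebu x j.+1 - chebu x (n - j)).

Lemma mul_pathA_resolvent_vec n x :
  (pathA R n - x%:M) *m resolvent_vec x n = ((2 - x) * chebu x n.+1) *: ones R n.
Proof.
pose g k := chebu x n.+1 - chebu x k - chebu x (n.+1 - k).
have -> : resolvent_vec x n = \col_(j < n) g j.+1 by apply/colP => j; rewrite !mxE.
rewrite mulmxBl mul_pathA_col; last 2 first.
- by rewrite /g subn0 chebu0 subr0 subrr.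
- by rewrite /g subnn chebu0 subrr subr0.
rewrite mul_scalar_mx; apply/colP => i; rewrite !mxE /g.
have lt_in := ltn_ord i.
rewrite (_ : n.+1 - i = (n - i.+1).+2)%N; last lia.
rewrite (_ : n.+1 - i.+1 = (n - i.+1).+1)%N; last lia.
rewrite (_ : n.+1 - i.+2 = n - i.+1)%N; last lia.
rewrite (chebuSS x i) (chebuSS x (n - i.+1)); ring.
Qed.

Lemma sum_resolvent_vec n x :
  \sum_(j < n) resolvent_vec x n j 0 =
  n%:R * chebu x n.+1 - 2 * \sum_(j < n) chebu x j.+1.
Proof.
under eq_bigr do rewrite mxE.
rewrite !sumrB sumr_const card_ord.
have -> : \sum_(j < n) chebu x (n - j) = \sum_(j < n) chebu x j.+1.
  rewrite (reindex_inj rev_ord_inj); apply: eq_bigr => j _ /=.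
  by rewrite (_ : n - (n - j.+1) = j.+1)%N //; have := ltn_ord j; lia.
by rewrite mulr_natl; ring.
Qed.

Lemma resolvent_sum_pathA n x :
  (0 < n)%N -> x != 2 -> ~~ eigenvalue (pathA R n) x ->
  resolvent_sum n x * ((2 - x) * chebu x n.+1) =
  n%:R * chebu x n.+1 - 2 * \sum_(j < n) chebu x j.+1.
Proof.
move=> n_gt0 x_neq2 not_ev; set c := (2 - x) * _.
have c_neq0 : c != 0 by rewrite mulf_neq0 ?chebu_neq0 // subr_eq0 eq_sym.
have inv_ones : invmx (pathA R n - x%:M) *m ones R n = c^-1 *: resolvent_vec x n.
  rewrite -[ones R n](scalerK c_neq0) -mul_pathA_resolvent_vec -scalemxAr.
  by rewrite mulKmx // not_eigenvalue_unitmx.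
rewrite /resolvent_sum -mulmxA inv_ones -scalemxAr mxE mulrAC mulVf // mul1r.
rewrite -sum_resolvent_vec mxE; apply: eq_bigr => j _.
by rewrite !mxE mul1r.
Qed.

Lemma resolvent_eqn_Phi n x :
  (0 < n)%N -> x != 2 -> ~~ eigenvalue (pathA R n) x ->
  ((x + 2) * resolvent_sum n x - 1) * ((2 - x) ^+ 2 * chebu x n.+1) = - Phi n x.
Proof.
move=> n_gt0 x_neq2 not_ev.
have chebu_n : chebu x n = chebu x n.+1 - 1 - (x - 2) * \sum_(j < n) chebu x j.+1.
  by rewrite sum_chebu; ring.
have -> : ((x + 2) * resolvent_sum n x - 1) * ((2 - x) ^+ 2 * chebu x n.+1) =
  (x + 2) * (2 - x) * (resolvent_sum n x * ((2 - x) * chebu x n.+1))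
  - (2 - x) ^+ 2 * chebu x n.+1 by ring.
by rewrite resolvent_sum_pathA // Phi_chebu // chebu_n; ring.
Qed.

End PathResolvent.

Theorem proposition4p5 (R : realFieldType) (n : nat) (hn : (3 <= n)%N) (x : R) :
  (Lambda1 n x /\ x <> 2) <->
  (Phi n x = 0 /\ ~~ eigenvalue (pathA R n) x /\
   x <> 0 /\ x <> -1 /\ x <> 2 /\ x <> -2).
Proof.
have n_gt0 : (0 < n)%N by apply: leq_trans hn.
split=> [[[[not_ev eqn] [_ [x0 [xN1 xN2]]]] x2] | [Phi0 [not_ev [x0 [xN1 [x2 xN2]]]]]].
- have := resolvent_eqn_Phi n_gt0 (introN eqP x2) not_ev.
  by rewrite eqn mul0r => /eqP; rewrite eq_sym oppr_eq0 => /eqP.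
- have := resolvent_eqn_Phi n_gt0 (introN eqP x2) not_ev.
  have c_neq0 : (2 - x) ^+ 2 * chebu x n.+1 != 0.
    by rewrite mulf_neq0 ?expf_neq0 ?chebu_neq0 // subr_eq0 eq_sym; apply/eqP.
  rewrite Phi0 oppr0 => /eqP; rewrite mulf_eq0 (negbTE c_neq0) orbF => /eqP eqn.
  by split=> //; split.
Qed.
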